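(* Let $W(T,Y)$ be a $W$-product of a semilattice $Y$ by a monoid $T$. Then $W(T,Y)$ is an $F$-restriction semigroup if and only if $Y$ has an identity (greatest element), if and only if $W(T,Y)$ is a monoid.
   Context: $W$-product: $T$ is a monoid acting on the left on the semilattice $Y$ (written $t*y$) by order-embeddings such that each range $t*Y$ is an order ideal of $Y$; $W(T,Y)=\{(t*y,t)\colon y\in Y,t\in T\}$ with $(t*y,t)(s*x,s)=(t*y\wedge(ts)*x,ts)$, $(t*y,t)^*=(y,1)$, $(t*y,t)^+=(t*y,1)$. It is a restriction semigroup (an algebra $(S,\cdot,{}^*,{}^+)$ satisfying $xx^*=x$, $x^*y^*=y^*x^*$, $(xy^* )^*=x^*y^*$, $x^*y=y(xy)^*$ and the duals for ${}^+$, $(x^+)^*=x^+$, $(x^* )^+=x^*$). A restriction semigroup is $F$-restriction if every class of the least congruence $\sigma$ identifying all projections $x^*$ has a maximum element in the natural partial order ($a\le b$ iff $a=eb$ for some projection $e$). *)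

From HB Require Import structures.
From mathcomp Require Import all_boot all_order.
Set Implicit Arguments. Unset Strict Implicit. Unset Printing Implicit Defensive.
Import Order.Theory.
Local Open Scope order_scope.

(** * Generic notions for a semigroup given as a subset [P] of a type [S]
    closed under [mul], with its set of projections [proj]
    (the projections of a restriction semigroup are the elements x^* ). *)

Definition natural_le (S : Type) (mul : S -> S -> S) (proj : S -> Prop) (a b : S) :=
  exists e, proj e /\ a = mul e b.

Definition is_congruence (S : Type) (P : S -> Prop) (mul : S -> S -> S)
    (R : S -> S -> Prop) :=
  [/\ forall a b, R a b -> P a /\ P b,
      forall a, P a -> R a a,
      forall a b, R a b -> R b a,
      forall a b c, R a b -> R b c -> R a c
    & forall a b c d, R a b -> R c d -> R (mul a c) (mul b d)].

Definition sigma (S : Type) (P : S -> Prop) (mul : S -> S -> S) (proj : S -> Prop)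
    (a b : S) :=
  forall R, is_congruence P mul R ->
    (forall e f, proj e -> proj f -> R e f) -> R a b.

Definition F_restriction (S : Type) (P : S -> Prop) (mul : S -> S -> S)
    (proj : S -> Prop) :=
  forall a, P a -> exists m, [/\ P m, sigma P mul proj a m &
    forall b, P b -> sigma P mul proj a b -> natural_le mul proj b m].

Definition is_monoid_on (S : Type) (P : S -> Prop) (mul : S -> S -> S) :=
  exists e, P e /\ forall a, P a -> mul e a = a /\ mul a e = a.

Definition is_monoid (T : Type) (mul : T -> T -> T) (one : T) :=
  [/\ associative mul, left_id one mul & right_id one mul].

Definition W_action (d : Order.disp_t) (Y : meetSemilatticeType d) (T : Type)
    (mul : T -> T -> T) (one : T) (act : T -> Y -> Y) :=
  [/\ forall y, act one y = y,
      forall t s y, act (mul t s) y = act t (act s y),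
      forall t y z, (act t y <= act t z) = (y <= z)
    & forall t y z, z <= act t y -> exists x, z = act t x].

(** Carrier of W(T,Y): pairs (t*y, t). *)
Definition W_carrier (d : Order.disp_t) (Y : meetSemilatticeType d) (T : Type)
    (act : T -> Y -> Y) (p : Y * T) :=
  exists y, p = (act p.2 y, p.2).

(** Product (t*y,t)(s*x,s) = (t*y /\ (ts)*x, ts); note (ts)*x = t*(s*x). *)
Definition W_mul (d : Order.disp_t) (Y : meetSemilatticeType d) (T : Type)
    (mul : T -> T -> T) (act : T -> Y -> Y) (p q : Y * T) : Y * T :=
  (p.1 `&` act p.2 q.1, mul p.2 q.2).

(** Projections of W(T,Y): the elements (t*y,t)^* = (y,1). *)
Definition W_proj (d : Order.disp_t) (Y : meetSemilatticeType d) (T : Type)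
    (one : T) (act : T -> Y -> Y) (e : Y * T) :=
  exists t y, e = (y, one) /\ W_carrier act (act t y, t).

Definition has_top (d : Order.disp_t) (Y : meetSemilatticeType d) :=
  exists e : Y, forall y, y <= e.

(* In W(T,Y) the congruence sigma just forgets the first coordinate, and the
   natural order compares first coordinates within a fixed second coordinate.
   So a sigma-class is {(t*y, t) | y in Y}, which is order-isomorphic to Y via
   the embedding y |-> t*y; it has a maximum iff Y has a top e, and then that
   maximum is (t*e, t).  Likewise (e, 1) is an identity of W(T,Y) exactly when
   e is the top of Y, and any identity must have this form. *)

From mathcomp Require Import all_boot all_order.
Import Order.Theory.
Local Open Scope order_scope.

Set Implicit Arguments.
Unset Strict Implicit.
Unset Printing Implicit Defensive.

Section WProduct.
Variables (d : Order.disp_t) (Y : meetSemilatticeType d)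
    (T : Type) (mul : T -> T -> T) (one : T) (act : T -> Y -> Y).
Hypotheses (HT : is_monoid mul one) (Hact : W_action mul one act).

Local Notation W := (W_carrier act).
Local Notation Wmul := (W_mul mul act).
Local Notation Wproj := (W_proj one act).
Local Notation Wsigma := (sigma W Wmul Wproj).

Lemma act1 y : act one y = y.
Proof. by case: Hact. Qed.

Lemma actM t s y : act (mul t s) y = act t (act s y).
Proof. by case: Hact. Qed.

Lemma act_le t y z : (act t y <= act t z) = (y <= z).
Proof. by case: Hact. Qed.

Lemma mul1t t : mul one t = t.
Proof. by case: HT. Qed.

Lemma mult1 t : mul t one = t.
Proof. by case: HT. Qed.

Lemma W_carrier_proj y : W (y, one).
Proof. by exists y; rewrite /= act1. Qed.

Lemma W_proj_pair y : Wproj (y, one).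
Proof. by exists one, y; split; last exists y. Qed.

Lemma W_mul_projl y p : Wmul (y, one) p = (y `&` p.1, p.2).
Proof. by rewrite /W_mul /= act1 mul1t. Qed.

Lemma W_mul_projr p y : Wmul p (y, one) = (p.1 `&` act p.2 y, p.2).
Proof. by rewrite /W_mul /= mult1. Qed.

Lemma W_mul_closed p q : W p -> W q -> W (Wmul p q).
Proof.
case: p => _ t [y /= ->]; case: q => _ s [x /= ->].
rewrite /W_mul /=.
have [z ->] : exists z, act t y `&` act t (act s x) = act (mul t s) z.
  case: Hact => _ _ _ ideal; apply: (ideal (mul t s) x).
  by rewrite actM leIr.
by exists z.
Qed.

Definition same_label (p q : Y * T) := [/\ W p, W q & p.2 = q.2].

Lemma same_label_congruence : is_congruence W Wmul same_label.
Proof.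
split.
- by move=> p q [].
- by move=> p Wp; split.
- by move=> p q [Wp Wq e]; split.
- by move=> p q r [Wp _ e1] [_ Wr e2]; split; rewrite // e1.
- move=> p q r s [Wp Wq e1] [Wr Ws e2].
  by split; [exact: W_mul_closed | exact: W_mul_closed | rewrite /W_mul /= e1 e2].
Qed.

(* Right multiplication by the projections (y,1) and (z,1) links (t*y, t) and
   (t*z, t) through their common lower bound (t*y & t*z, t). *)
Lemma W_sigmaE p q : Wsigma p q <-> same_label p q.
Proof.
split.
  apply=> [|e f [t [y [-> _]]] [s [z [-> _]]]]; first exact: same_label_congruence.
  by split=> //; exact: W_carrier_proj.
case: p q => _ t [_ s] [[y /= ->] [z /= ->] /= <-] R HR Hproj.
case: (HR) => _ Rrefl Rsym Rtrans Rmul.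
have Wty : W (act t y, t) by exists y.
have Wtz : W (act t z, t) by exists z.
have Rlink u v : W (act t u, t) -> R (act t u, t) (act t u `&` act t v, t).
  move=> Wtu.
  have := Rmul _ _ _ _ (Rrefl _ Wtu) (Hproj _ _ (W_proj_pair u) (W_proj_pair v)).
  by rewrite !W_mul_projr meetxx.
apply: Rtrans (Rlink _ _ Wty) _; apply: Rsym.
by rewrite meetC; apply: Rlink.
Qed.

Lemma W_natural_leE p q : natural_le Wmul Wproj p q <-> p.1 <= q.1 /\ p.2 = q.2.
Proof.
split.
  by case=> _ [[t [y [-> _]]] ->]; rewrite W_mul_projl /= leIr.
case: p q => [a t] [b s] /= [ab <-]; exists (a, one); split; first exact: W_proj_pair.
by rewrite W_mul_projl /= (meet_l ab).
Qed.

Lemma F_restriction_has_top (y0 : Y) :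
  F_restriction W Wmul Wproj -> has_top Y.
Proof.
move=> /(_ _ (W_carrier_proj y0)) [[e u] [_ /W_sigmaE [_ _ /= <-] maxe]].
exists e => y.
have y0y : Wsigma (y0, one) (y, one).
  by apply/W_sigmaE; split=> //; exact: W_carrier_proj.
by have /W_natural_leE [] := maxe _ (W_carrier_proj y) y0y.
Qed.

Lemma has_top_F_restriction : has_top Y -> F_restriction W Wmul Wproj.
Proof.
case=> e top [_ t] [y /= ->]; exists (act t e, t); split.
- by exists e.
- by apply/W_sigmaE; split; [exists y | exists e |].
- move=> [_ s] [z /= ->] /W_sigmaE [_ _ /= <-].
  by apply/W_natural_leE; rewrite /= act_le.
Qed.

Lemma has_top_W_monoid : has_top Y -> is_monoid_on W Wmul.
Proof.
case=> e top; exists (e, one); split; first exact: W_carrier_proj.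
move=> [_ t] [y /= ->]; rewrite W_mul_projl W_mul_projr /= meet_r ?meet_l //.
by rewrite act_le.
Qed.

Lemma W_monoid_has_top : is_monoid_on W Wmul -> has_top Y.
Proof.
case=> -[e u] [_ unit]; exists e => y.
by have [_] := unit _ (W_carrier_proj y); rewrite /W_mul /= act1 => -[<- _]; exact: leIr.
Qed.

End WProduct.

Theorem corollary3p6 (d : Order.disp_t) (Y : meetSemilatticeType d) (y0 : Y)
    (T : Type) (mul : T -> T -> T) (one : T) (act : T -> Y -> Y)
    (HT : is_monoid mul one) (Hact : W_action mul one act) :
  (F_restriction (W_carrier act) (W_mul mul act) (W_proj one act) <-> has_top Y) /\
  (has_top Y <-> is_monoid_on (W_carrier act) (W_mul mul act)).
Proof.
split; split.
- exact: F_restriction_has_top HT Hact y0.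
- exact: has_top_F_restriction HT Hact.
- exact: has_top_W_monoid HT Hact.
- exact: W_monoid_has_top Hact.
Qed.
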